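(* Let $p\in(1/2,1)$, $\alpha=p/(1-p)$ and $V\in\{G,B\}$. Then $$\lim_{\epsilon\to1}\mathbb{P}_{Y\text{-cas}}(\epsilon)=\frac{1}{e^{t}-t},$$ where $t=\dfrac{\log\alpha}{\alpha-1}$ if $V=G$ and $t=\dfrac{\alpha\log\alpha}{\alpha-1}$ if $V=B$.
   Context: Observational learning model: an item has true value $V\in\{G,B\}$; agents arrive sequentially, each receives a private binary signal equal to the ''correct'' signal with probability $p\in(1/2,1)$, and each agent is independently fake with probability $\epsilon\in[0,1)$ (a fake agent's recorded action is always $Y$ = buy). Define $a=p+(1-p)\epsilon$, $b=p(1-\epsilon)$ and $\eta=\eta(\epsilon)=\log\big(a/(1-b)\big)/\log\alpha\in(0,1]$. Given $V$, let $p_f=a$ if $V=G$ and $p_f=1-b$ if $V=B$. Before any cascade, the agents' sufficient statistic $h$ evolves as the following random walk: $h_0=0$ and, independently at each step, $h$ increases by $\eta$ with probability $p_f$ (an observed $Y$) or decreases by $1$ with probability $1-p_f$ (an observed $N$); the walk is stopped the first time it leaves $[-1,1]$. Leaving above $1$ is a $Y$ cascade, leaving below $-1$ an $N$ cascade. $\mathbb{P}_{Y\text{-cas}}(\epsilon)$ denotes the probability (given $V$) that the walk leaves $[-1,1]$ above $1$. *)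

From Stdlib Require Import Reals.
From Coquelicot Require Import Coquelicot.
Open Scope R_scope.

(* True value of the item. *)
Inductive value := G | B.

Definition alpha (p : R) : R := p / (1 - p).
Definition a_par (p eps : R) : R := p + (1 - p) * eps.
Definition b_par (p eps : R) : R := p * (1 - eps).
Definition eta (p eps : R) : R :=
  ln (a_par p eps / (1 - b_par p eps)) / ln (alpha p).

(* probability of an observed Y given V *)
Definition p_f (p eps : R) (V : value) : R :=
  match V with G => a_par p eps | B => 1 - b_par p eps end.

(* exitY p eps V n x : probability that the random walk started at x
   (up-step +eta w.p. p_f, down-step -1 w.p. 1 - p_f, stopped at the
   first exit from [-1,1]) has left [-1,1] above 1 within n steps. *)
Fixpoint exitY (p eps : R) (V : value) (n : nat) (x : R) : R :=
  match n with
  | O => if Rlt_dec 1 x then 1 else 0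
  | S n' =>
      if Rle_dec (-1) x then
        if Rle_dec x 1 then
          p_f p eps V * exitY p eps V n' (x + eta p eps)
          + (1 - p_f p eps V) * exitY p eps V n' (x - 1)
        else 1
      else 0
  end.

(* P_{Y-cas}(eps): probability that the walk from h_0 = 0 ever leaves
   [-1,1] above 1 (limit of the nondecreasing bounded sequence). *)
Definition P_Ycas (p eps : R) (V : value) : R :=
  real (Lim_seq (fun n => exitY p eps V n 0)).

Definition t_par (p : R) (V : value) : R :=
  match V with
  | G => ln (alpha p) / (alpha p - 1)
  | B => alpha p * ln (alpha p) / (alpha p - 1)
  end.

From Stdlib Require Import Reals Lra Lia Psatz ZArith.
From Coquelicot Require Import Coquelicot.
Open Scope R_scope.

(* Write g(x) for the probability of a Y-cascade from height x, q = p_f, h = eta and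
   M = up (1/h), the number of consecutive up-steps that carry 0 above 1.  A single
   down-step taken at height j h (j < M) lands at j h - 1, from where M - j further
   up-steps return to height >= 0 while M - j - 1 cannot; with c = M (1 - q) this
   renewal argument at 0 gives
     q^M <= g(0) (1 - c q^M)   and   g(0) (q^2 - c q^M) <= q^2 q^M.
   As eps -> 1, 1 - q = kappa (1 - eps) and h ln(alpha) ~ (2p - 1)(1 - eps), so
   c -> t and q^M = exp (c ln q / (1 - q)) -> exp (-t); both bounds then tend to
   exp (-t) / (1 - t exp (-t)) = 1 / (exp t - t). *)

Section FilterLimits.

Context {T : Type} {F : (T -> Prop) -> Prop} {FF : Filter F}.

Lemma filterlim_Rplus (f g : T -> R) (a b : R) :
  filterlim f F (locally a) -> filterlim g F (locally b) ->
  filterlim (fun x => f x + g x) F (locally (a + b)).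
Proof. intros Hf Hg; exact (filterlim_comp_2 f g Rplus Hf Hg (filterlim_plus a b)). Qed.

Lemma filterlim_Rmult (f g : T -> R) (a b : R) :
  filterlim f F (locally a) -> filterlim g F (locally b) ->
  filterlim (fun x => f x * g x) F (locally (a * b)).
Proof. intros Hf Hg; exact (filterlim_comp_2 f g Rmult Hf Hg (filterlim_mult a b)). Qed.

Lemma filterlim_Rminus (f g : T -> R) (a b : R) :
  filterlim f F (locally a) -> filterlim g F (locally b) ->
  filterlim (fun x => f x - g x) F (locally (a - b)).
Proof.
  intros Hf Hg; apply filterlim_Rplus; [exact Hf|].
  exact (filterlim_comp _ _ _ _ _ _ _ _ Hg (filterlim_opp b)).
Qed.

Lemma filterlim_Rdiv (f g : T -> R) (a b : R) : b <> 0 ->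
  filterlim f F (locally a) -> filterlim g F (locally b) ->
  filterlim (fun x => f x / g x) F (locally (a / b)).
Proof.
  intros Hb Hf Hg; apply filterlim_Rmult; [exact Hf|].
  exact (filterlim_comp _ _ _ _ _ _ _ _ Hg (continuous_Rinv b Hb)).
Qed.

Lemma filterlim_locally_pos (f : T -> R) (l : R) :
  0 < l -> filterlim f F (locally l) -> F (fun x => 0 < f x).
Proof.
  intros Hl Hf; apply (Hf (fun y => 0 < y)).
  exists (mkposreal l Hl); intros y Hy; change (Rabs (y - l) < l) in Hy.
  apply Rabs_def2 in Hy; lra.
Qed.

Lemma filterlim_between_ratios (g a b a' b' : T -> R) (A m : R) : 0 < m ->
  filterlim a F (locally A) -> filterlim b F (locally m) ->
  filterlim a' F (locally A) -> filterlim b' F (locally m) ->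
  F (fun x => a x <= g x * b x /\ g x * b' x <= a' x) ->
  filterlim g F (locally (A / m)).
Proof.
  intros Hm Ha Hb Ha' Hb' Hg.
  apply (filterlim_le_le (fun x => a x / b x) g (fun x => a' x / b' x) (A / m));
    [| apply filterlim_Rdiv; auto; lra | apply filterlim_Rdiv; auto; lra].
  generalize (filter_and _ _ Hg (filter_and _ _
    (filterlim_locally_pos b m Hm Hb) (filterlim_locally_pos b' m Hm Hb'))).
  apply filter_imp; intros x [[Hlo Hhi] [Hbx Hbx']].
  split; [apply Rle_div_l | apply Rle_div_r]; lra.
Qed.

End FilterLimits.

Lemma at_left_one_eventually (P : R -> Prop) :
  (forall e, 0 < e < 1 -> P e) -> at_left 1 P.
Proof.
  intros HP; exists (mkposreal 1 Rlt_0_1); intros e He He1; apply HP.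
  change (Rabs (e - 1) < 1) in He; apply Rabs_def2 in He; lra.
Qed.

Lemma filterlim_at_left_derivable (f : R -> R) (x l : R) :
  ex_derive f x -> f x = l -> filterlim f (at_left x) (locally l).
Proof.
  intros Hf <-; apply (filterlim_filter_le_1 (F := locally x)).
  - intros P HP; exact (filter_imp P _ (fun y Hy _ => Hy) HP).
  - exact (ex_derive_continuous f x Hf).
Qed.

Section CascadeProbability.

Variables (p eps : R) (V : value).
Hypothesis p_f_prob : 0 <= p_f p eps V <= 1.

Lemma exitY_succ n x : exitY p eps V (S n) x =
  if Rle_dec (-1) x then
    if Rle_dec x 1 then
      p_f p eps V * exitY p eps V n (x + eta p eps)
      + (1 - p_f p eps V) * exitY p eps V n (x - 1)
    else 1
  else 0.
Proof. reflexivity. Qed.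

Lemma exitY_bounds n x : 0 <= exitY p eps V n x <= 1.
Proof.
  revert x; induction n as [|n IH]; intros x; simpl.
  - destruct (Rlt_dec 1 x); lra.
  - destruct (Rle_dec (-1) x); [destruct (Rle_dec x 1)|]; try lra.
    pose proof (IH (x + eta p eps)); pose proof (IH (x - 1)); nra.
Qed.

Lemma exitY_le_S n x : exitY p eps V n x <= exitY p eps V (S n) x.
Proof.
  revert x; induction n as [|n IH]; intros x.
  - pose proof (exitY_bounds 0 (x + eta p eps)); pose proof (exitY_bounds 0 (x - 1)).
    simpl in *; destruct (Rlt_dec 1 x), (Rle_dec (-1) x); try destruct (Rle_dec x 1); nra.
  - pose proof (IH (x + eta p eps)); pose proof (IH (x - 1)).
    rewrite (exitY_succ (S n)), (exitY_succ n).
    destruct (Rle_dec (-1) x); [destruct (Rle_dec x 1)|]; nra.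
Qed.

Lemma exitY_monotone n x y : x <= y -> exitY p eps V n x <= exitY p eps V n y.
Proof.
  revert x y; induction n as [|n IH]; intros x y Hxy; simpl.
  - destruct (Rlt_dec 1 x), (Rlt_dec 1 y); lra.
  - pose proof (exitY_bounds n (x + eta p eps)); pose proof (exitY_bounds n (x - 1)).
    pose proof (exitY_bounds n (y + eta p eps)); pose proof (exitY_bounds n (y - 1)).
    pose proof (IH (x + eta p eps) (y + eta p eps) ltac:(lra)).
    pose proof (IH (x - 1) (y - 1) ltac:(lra)).
    destruct (Rle_dec (-1) x); [destruct (Rle_dec x 1)|];
      destruct (Rle_dec (-1) y); try destruct (Rle_dec y 1); nra.
Qed.

Definition cascade_prob (x : R) : R := real (Lim_seq (fun n => exitY p eps V n x)).

Lemma is_lim_seq_cascade_prob x :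
  is_lim_seq (fun n => exitY p eps V n x) (cascade_prob x).
Proof.
  apply Lim_seq_correct', ex_finite_lim_seq_incr with 1.
  - intros n; apply exitY_le_S.
  - intros n; apply exitY_bounds.
Qed.

Lemma cascade_prob_above x : 1 < x -> cascade_prob x = 1.
Proof.
  intros Hx; unfold cascade_prob; rewrite (Lim_seq_ext _ (fun _ => 1)).
  - now rewrite Lim_seq_const.
  - intros [|n]; simpl;
      [destruct (Rlt_dec 1 x) | destruct (Rle_dec (-1) x); [destruct (Rle_dec x 1)|]]; lra.
Qed.

Lemma cascade_prob_below x : x < -1 -> cascade_prob x = 0.
Proof.
  intros Hx; unfold cascade_prob; rewrite (Lim_seq_ext _ (fun _ => 0)).
  - now rewrite Lim_seq_const.
  - intros [|n]; simpl; [destruct (Rlt_dec 1 x)|destruct (Rle_dec (-1) x)]; lra.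
Qed.

Lemma cascade_prob_step x : -1 <= x <= 1 ->
  cascade_prob x = p_f p eps V * cascade_prob (x + eta p eps)
                   + (1 - p_f p eps V) * cascade_prob (x - 1).
Proof.
  intros Hx.
  assert (Hnow : is_lim_seq (fun n => exitY p eps V (S n) x) (cascade_prob x))
    by apply (is_lim_seq_incr_1 (fun n => exitY p eps V n x)), is_lim_seq_cascade_prob.
  assert (Hstep : is_lim_seq (fun n => exitY p eps V (S n) x)
    (p_f p eps V * cascade_prob (x + eta p eps) + (1 - p_f p eps V) * cascade_prob (x - 1))).
  { apply is_lim_seq_ext with
      (fun n => p_f p eps V * exitY p eps V n (x + eta p eps)
                + (1 - p_f p eps V) * exitY p eps V n (x - 1)).
    - intros n; simpl; destruct (Rle_dec (-1) x); [destruct (Rle_dec x 1)|]; lra.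
    - apply is_lim_seq_plus';
        [ apply (is_lim_seq_scal_l _ _ (cascade_prob (x + eta p eps)))
        | apply (is_lim_seq_scal_l _ _ (cascade_prob (x - 1))) ];
        apply is_lim_seq_cascade_prob. }
  apply is_lim_seq_unique in Hnow, Hstep; rewrite Hnow in Hstep; now injection Hstep.
Qed.

Lemma cascade_prob_monotone x y : x <= y -> cascade_prob x <= cascade_prob y.
Proof.
  intros Hxy; exact (is_lim_seq_le _ _ (cascade_prob x) (cascade_prob y)
    (fun n => exitY_monotone n x y Hxy) (is_lim_seq_cascade_prob x) (is_lim_seq_cascade_prob y)).
Qed.

Lemma cascade_prob_ge0 x : 0 <= cascade_prob x.
Proof.
  exact (is_lim_seq_le (fun _ => 0) _ 0 (cascade_prob x) (fun n => proj1 (exitY_bounds n x))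
    (is_lim_seq_const 0) (is_lim_seq_cascade_prob x)).
Qed.

End CascadeProbability.

Section RenewalBounds.

Variables (g : R -> R) (q h : R) (M : nat).
Hypothesis q_unit : 0 < q <= 1.
Hypothesis h_pos : 0 < h.
Hypothesis g_above : forall x, 1 < x -> g x = 1.
Hypothesis g_below : forall x, x < -1 -> g x = 0.
Hypothesis g_step : forall x, -1 <= x <= 1 -> g x = q * g (x + h) + (1 - q) * g (x - 1).
Hypothesis g_le : forall x y, x <= y -> g x <= g y.
Hypothesis g_ge0 : forall x, 0 <= g x.
Hypothesis M_exit : 1 < INR M * h.
Hypothesis M_last : (INR M - 1) * h <= 1.

Lemma pow_q_unit n : 0 < q ^ n <= 1.
Proof. split; [apply pow_lt; lra | rewrite <- (pow1 n); apply pow_incr; lra]. Qed.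

Lemma g_ge_climb m y : -1 <= y -> 0 <= y + INR m * h -> q ^ m * g 0 <= g y.
Proof.
  revert y; induction m as [|m IH]; intros y Hy Hclimb.
  - simpl in *; rewrite Rmult_1_l; apply g_le; lra.
  - rewrite S_INR in Hclimb; pose proof (pow_q_unit (S m)); pose proof (g_ge0 0).
    destruct (Rle_lt_dec 0 y) as [Hy0|Hy0].
    + pose proof (g_le 0 y Hy0); nra.
    + rewrite (g_step y), (g_below (y - 1)) by lra.
      pose proof (IH (y + h) ltac:(lra) ltac:(lra)); simpl; nra.
Qed.

Lemma g_le_climb m y : y + INR m * h <= 0 -> g y <= q ^ m * g h.
Proof.
  revert y; induction m as [|m IH]; intros y Hclimb.
  - simpl in *; rewrite Rmult_1_l; apply g_le; lra.
  - rewrite S_INR in Hclimb; pose proof (pos_INR m).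
    destruct (Rlt_le_dec y (-1)) as [Hy|Hy].
    + rewrite (g_below y Hy); pose proof (pow_q_unit (S m)); pose proof (g_ge0 h); nra.
    + rewrite (g_step y), (g_below (y - 1)) by nra.
      pose proof (IH (y + h) ltac:(nra)); simpl; nra.
Qed.

Lemma g0_ge_run_prefix K : (K <= M)%nat ->
  INR K * (1 - q) * q ^ M * g 0 + q ^ K * g (INR K * h) <= g 0.
Proof.
  induction K as [|K IH]; intros HK.
  - simpl; rewrite !Rmult_0_l, Rmult_1_l; lra.
  - assert (HKM : INR K + 1 <= INR M) by (rewrite <- S_INR; apply le_INR; lia).
    pose proof (pos_INR K); pose proof (pow_q_unit K).
    assert (Hrecover : q ^ (M - K) * g 0 <= g (INR K * h - 1)).
    { apply g_ge_climb; [nra|]; rewrite minus_INR by lia; nra. }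
    assert (Hsplit : q ^ M = q ^ K * q ^ (M - K)) by (rewrite <- pow_add; f_equal; lia).
    specialize (IH ltac:(lia)); rewrite (g_step (INR K * h)) in IH by nra.
    rewrite S_INR; replace ((INR K + 1) * h) with (INR K * h + h) by ring; simpl pow.
    assert (q ^ K * ((1 - q) * (q ^ (M - K) * g 0))
            <= q ^ K * ((1 - q) * g (INR K * h - 1))) by (apply Rmult_le_compat_l; nra).
    rewrite Hsplit in IH |- *; nra.
Qed.

Lemma g0_le_run_prefix K : (K <= M)%nat ->
  q * g 0 <= INR K * (1 - q) * q ^ M * g h + q ^ S K * g (INR K * h).
Proof.
  induction K as [|K IH]; intros HK.
  - simpl; rewrite !Rmult_0_l, Rmult_1_r; lra.
  - assert (HKM : INR K + 1 <= INR M) by (rewrite <- S_INR; apply le_INR; lia).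
    pose proof (pos_INR K); pose proof (pow_q_unit (S K)).
    assert (Hstuck : g (INR K * h - 1) <= q ^ (M - S K) * g h).
    { apply g_le_climb; rewrite minus_INR, S_INR by lia; nra. }
    assert (Hsplit : q ^ M = q ^ S K * q ^ (M - S K)) by (rewrite <- pow_add; f_equal; lia).
    specialize (IH ltac:(lia)); rewrite (g_step (INR K * h)) in IH by nra.
    rewrite S_INR; replace ((INR K + 1) * h) with (INR K * h + h) by ring; simpl pow in *.
    assert (q * q ^ K * ((1 - q) * g (INR K * h - 1))
            <= q * q ^ K * ((1 - q) * (q ^ (M - S K) * g h))) by (apply Rmult_le_compat_l; nra).
    rewrite Hsplit; simpl pow; nra.
Qed.

Lemma g0_ge_renewal : q ^ M <= g 0 * (1 - INR M * (1 - q) * q ^ M).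
Proof.
  pose proof (g0_ge_run_prefix M (le_n M)) as Hrun.
  rewrite (g_above (INR M * h) M_exit) in Hrun; lra.
Qed.

Lemma g0_le_renewal : g 0 * (q * q - INR M * (1 - q) * q ^ M) <= q * q * q ^ M.
Proof.
  pose proof (g0_le_run_prefix M (le_n M)) as Hrun.
  rewrite (g_above (INR M * h) M_exit) in Hrun; simpl pow in *.
  assert (Hh : q * g h <= g 0).
  { rewrite (g_step 0), Rplus_0_l by lra; pose proof (g_ge0 (0 - 1)); nra. }
  pose proof (pos_INR M); pose proof (pow_q_unit M).
  assert (0 <= INR M * (1 - q) * q ^ M) by (apply Rmult_le_pos; nra).
  nra.
Qed.

End RenewalBounds.

Lemma ln_bounds x : 0 < x -> 1 - / x <= ln x <= x - 1.
Proof.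
  intros Hx; pose proof (exp_ineq1_le (ln x)); pose proof (exp_ineq1_le (ln (/ x))).
  rewrite exp_ln in * by (try apply Rinv_0_lt_compat; lra).
  rewrite ln_Rinv in * by lra; lra.
Qed.

Lemma ln_div_one_sub_bounds x : 0 < x < 1 -> - 1 / x <= ln x / (1 - x) <= - 1.
Proof.
  intros Hx; destruct (ln_bounds x) as [Hlo Hhi]; [lra|].
  replace (- 1 / x) with ((1 - / x) / (1 - x)) by (field; lra).
  replace (- 1) with ((x - 1) / (1 - x)) by (field; lra).
  assert (0 < / (1 - x)) by (apply Rinv_0_lt_compat; lra).
  unfold Rdiv; split; apply Rmult_le_compat_r; lra.
Qed.

Section Asymptotics.

Variables (p : R) (V : value).
Hypothesis p_range : 1 / 2 < p < 1.

Definition down_rate : R := match V with G => 1 - p | B => p end.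

Lemma one_sub_p_f eps : 1 - p_f p eps V = down_rate * (1 - eps).
Proof. unfold p_f, a_par, b_par, down_rate; destruct V; ring. Qed.

Lemma down_rate_unit : 0 < down_rate < 1.
Proof. unfold down_rate; destruct V; lra. Qed.

Lemma ln_alpha_pos : 0 < ln (alpha p).
Proof.
  rewrite <- ln_1; apply ln_increasing; [lra|].
  unfold alpha; apply Rlt_div_r; lra.
Qed.

Lemma t_par_eq : t_par p V = down_rate * ln (alpha p) / (2 * p - 1).
Proof.
  assert (Halpha : alpha p - 1 = (2 * p - 1) / (1 - p)) by (unfold alpha; field; lra).
  unfold t_par, down_rate; destruct V; rewrite Halpha; [|unfold alpha at 1]; field; lra.
Qed.

Lemma eta_mul_ln_alpha eps :
  eta p eps * ln (alpha p) = ln ((1 - (1 - p) * (1 - eps)) / (1 - p * (1 - eps))).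
Proof.
  pose proof ln_alpha_pos; unfold eta, a_par, b_par.
  replace (p + (1 - p) * eps) with (1 - (1 - p) * (1 - eps)) by ring.
  field; lra.
Qed.

Lemma eta_pos eps : 0 < eps < 1 -> 0 < eta p eps.
Proof.
  intros Heps; unfold eta, a_par, b_par; apply Rdiv_lt_0_compat; [|exact ln_alpha_pos].
  rewrite <- ln_1; apply ln_increasing; [lra|]; apply Rlt_div_r; nra.
Qed.

(* From [1 - 1/r <= ln r <= r - 1] at [r = a / (1 - b)]. *)
Lemma inv_eta_bounds eps : 0 < eps < 1 ->
  (1 - p * (1 - eps)) / (2 * p - 1) <= (1 - eps) / (eta p eps * ln (alpha p))
  <= (1 - (1 - p) * (1 - eps)) / (2 * p - 1).
Proof.
  intros Heps; rewrite eta_mul_ln_alpha; set (d := 1 - eps).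
  assert (Hd : 0 < d < 1) by (unfold d; lra).
  set (r := (1 - (1 - p) * d) / (1 - p * d)).
  assert (Hr : 0 < r) by (apply Rdiv_lt_0_compat; nra).
  destruct (ln_bounds r Hr) as [Hlo Hhi].
  replace (1 - / r) with ((2 * p - 1) * d / (1 - (1 - p) * d)) in Hlo
    by (unfold r; field; nra).
  replace (r - 1) with ((2 * p - 1) * d / (1 - p * d)) in Hhi by (unfold r; field; nra).
  assert (Hpos : 0 < (2 * p - 1) * d / (1 - (1 - p) * d)) by (apply Rdiv_lt_0_compat; nra).
  replace ((1 - p * d) / (2 * p - 1)) with (d / ((2 * p - 1) * d / (1 - p * d)))
    by (field; nra).
  replace ((1 - (1 - p) * d) / (2 * p - 1)) with (d / ((2 * p - 1) * d / (1 - (1 - p) * d)))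
    by (field; nra).
  unfold Rdiv at 1 3 5; split; apply Rmult_le_compat_l, Rinv_le_contravar; lra.
Qed.

Definition ups_to_exit (eps : R) : nat := Z.to_nat (up (1 / eta p eps)).
Definition expected_falls (eps : R) : R := INR (ups_to_exit eps) * (1 - p_f p eps V).
Definition run_prob (eps : R) : R := p_f p eps V ^ ups_to_exit eps.

Lemma p_f_unit eps : 0 < eps < 1 -> 0 < p_f p eps V < 1.
Proof. intros Heps; pose proof (one_sub_p_f eps); pose proof down_rate_unit; nra. Qed.

Lemma ups_to_exit_spec eps : 0 < eps < 1 ->
  1 < INR (ups_to_exit eps) * eta p eps /\ (INR (ups_to_exit eps) - 1) * eta p eps <= 1.
Proof.
  intros Heps; pose proof (eta_pos eps Heps) as Heta.
  assert (Hinv : 0 < 1 / eta p eps) by (apply Rdiv_lt_0_compat; lra).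
  destruct (archimed (1 / eta p eps)) as [Hup1 Hup2].
  assert (HM : INR (ups_to_exit eps) = IZR (up (1 / eta p eps))).
  { unfold ups_to_exit; rewrite INR_IZR_INZ, Z2Nat.id; [reflexivity|].
    apply le_IZR; lra. }
  rewrite HM; split.
  - apply Rlt_div_l in Hup1; lra.
  - assert (Hle : IZR (up (1 / eta p eps)) - 1 <= 1 / eta p eps) by lra.
    apply Rle_div_r in Hle; lra.
Qed.

Lemma P_Ycas_renewal_bounds eps : 0 < eps < 1 ->
  run_prob eps <= P_Ycas p eps V * (1 - expected_falls eps * run_prob eps) /\
  P_Ycas p eps V * (p_f p eps V * p_f p eps V - expected_falls eps * run_prob eps)
    <= p_f p eps V * p_f p eps V * run_prob eps.
Proof.
  intros Heps; pose proof (p_f_unit eps Heps) as Hq.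
  assert (Hq' : 0 <= p_f p eps V <= 1) by lra.
  destruct (ups_to_exit_spec eps Heps) as [Hexit Hlast].
  change (P_Ycas p eps V) with (cascade_prob p eps V 0).
  unfold expected_falls, run_prob.
  split; [apply g0_ge_renewal with (h := eta p eps) | apply g0_le_renewal with (h := eta p eps)];
    auto using eta_pos, cascade_prob_above, cascade_prob_below, cascade_prob_step,
      cascade_prob_monotone, cascade_prob_ge0; lra.
Qed.

Lemma filterlim_p_f : filterlim (fun eps => p_f p eps V) (at_left 1) (locally 1).
Proof.
  apply (filterlim_ext (fun eps => 1 - down_rate * (1 - eps))).
  - intros eps; rewrite <- one_sub_p_f; ring.
  - apply filterlim_at_left_derivable; [auto_derive; auto | ring].
Qed.

Lemma filterlim_drift_ratio :
  filterlim (fun eps => (1 - p_f p eps V) / eta p eps) (at_left 1) (locally (t_par p V)).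
Proof.
  pose proof ln_alpha_pos; pose proof down_rate_unit.
  set (k := down_rate * ln (alpha p)); assert (Hk : 0 < k) by (unfold k; nra).
  apply (filterlim_le_le
    (fun eps => k * ((1 - p * (1 - eps)) / (2 * p - 1))) _
    (fun eps => k * ((1 - (1 - p) * (1 - eps)) / (2 * p - 1))) (t_par p V)).
  - apply at_left_one_eventually; intros eps Heps; pose proof (eta_pos eps Heps).
    replace ((1 - p_f p eps V) / eta p eps)
      with (k * ((1 - eps) / (eta p eps * ln (alpha p))))
      by (rewrite one_sub_p_f; unfold k; field; lra).
    destruct (inv_eta_bounds eps Heps); split; apply Rmult_le_compat_l; lra.
  - apply filterlim_at_left_derivable; [auto_derive; auto | rewrite t_par_eq; unfold k; field; lra].
  - apply filterlim_at_left_derivable; [auto_derive; auto | rewrite t_par_eq; unfold k; field; lra].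
Qed.

Lemma filterlim_expected_falls :
  filterlim expected_falls (at_left 1) (locally (t_par p V)).
Proof.
  apply (filterlim_le_le (fun eps => (1 - p_f p eps V) / eta p eps) _
    (fun eps => (1 - p_f p eps V) / eta p eps + (1 - p_f p eps V)) (t_par p V)).
  - apply at_left_one_eventually; intros eps Heps.
    pose proof (eta_pos eps Heps); pose proof (p_f_unit eps Heps).
    destruct (ups_to_exit_spec eps Heps) as [Hexit Hlast]; unfold expected_falls.
    assert (Hinv : eta p eps * / eta p eps = 1) by (apply Rinv_r; lra).
    assert (0 < / eta p eps) by (apply Rinv_0_lt_compat; lra).
    unfold Rdiv; split; nra.
  - exact filterlim_drift_ratio.
  - replace (t_par p V) with (t_par p V + (1 - 1)) by ring.
    apply filterlim_Rplus, filterlim_Rminus;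
      [exact filterlim_drift_ratio | apply filterlim_const | exact filterlim_p_f].
Qed.

Lemma filterlim_ln_p_f_ratio :
  filterlim (fun eps => ln (p_f p eps V) / (1 - p_f p eps V)) (at_left 1) (locally (- 1)).
Proof.
  apply (filterlim_le_le (fun eps => - 1 / p_f p eps V) _ (fun _ => - 1) (- 1)).
  - apply at_left_one_eventually; intros eps Heps.
    exact (ln_div_one_sub_bounds _ (p_f_unit eps Heps)).
  - pose proof (filterlim_Rdiv (fun _ => - 1) _ (- 1) 1 R1_neq_R0
      (filterlim_const (- 1)) filterlim_p_f) as Hlim.
    now rewrite Rdiv_1_r in Hlim.
  - apply filterlim_const.
Qed.

Lemma filterlim_run_prob : filterlim run_prob (at_left 1) (locally (exp (- t_par p V))).
Proof.
  apply (filterlim_ext_loc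
    (fun eps => exp (expected_falls eps * (ln (p_f p eps V) / (1 - p_f p eps V))))).
  - apply at_left_one_eventually; intros eps Heps; pose proof (p_f_unit eps Heps).
    unfold run_prob, expected_falls; rewrite <- Rpower_pow by lra; unfold Rpower.
    f_equal; field; lra.
  - eapply filterlim_comp; [|apply continuous_exp].
    replace (- t_par p V) with (t_par p V * - 1) by ring.
    exact (filterlim_Rmult _ _ _ _ filterlim_expected_falls filterlim_ln_p_f_ratio).
Qed.

End Asymptotics.

Theorem mainTheorem6 (p : R) (V : value) :
  1 / 2 < p < 1 ->
  filterlim (fun eps => P_Ycas p eps V) (at_left 1)
    (locally (1 / (exp (t_par p V) - t_par p V))).
Proof.
  intros Hp; set (t := t_par p V).
  assert (Hfactor : 1 * 1 - t * exp (- t) = exp (- t) * (exp t - t)).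
  { rewrite Rmult_minus_distr_l, <- exp_plus, Rplus_opp_l, exp_0; ring. }
  assert (Hexp : 0 < exp t - t) by (pose proof (exp_ineq1_le t); lra).
  assert (Hm : 0 < 1 * 1 - t * exp (- t))
    by (rewrite Hfactor; apply Rmult_lt_0_compat; [apply exp_pos | lra]).
  replace (1 / (exp t - t)) with (exp (- t) / (1 * 1 - t * exp (- t)))
    by (rewrite Hfactor; field; split; [lra | apply Rgt_not_eq, exp_pos]).
  pose proof (filterlim_run_prob p V Hp) as Hrun.
  pose proof (filterlim_Rmult _ _ _ _ (filterlim_expected_falls p V Hp) Hrun) as Hfalls.
  pose proof (filterlim_Rmult _ _ _ _ (filterlim_p_f p V) (filterlim_p_f p V)) as Hq2.
  apply (filterlim_between_ratios _ (run_prob p V)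
    (fun eps => 1 * 1 - expected_falls p V eps * run_prob p V eps)
    (fun eps => p_f p eps V * p_f p eps V * run_prob p V eps)
    (fun eps => p_f p eps V * p_f p eps V - expected_falls p V eps * run_prob p V eps)
    (exp (- t)) _ Hm Hrun).
  - exact (filterlim_Rminus _ _ _ _ (filterlim_const (1 * 1)) Hfalls).
  - replace (exp (- t)) with (1 * 1 * exp (- t)) by ring.
    exact (filterlim_Rmult _ _ _ _ Hq2 Hrun).
  - exact (filterlim_Rminus _ _ _ _ Hq2 Hfalls).
  - apply at_left_one_eventually; intros eps Heps; rewrite Rmult_1_l.
    exact (P_Ycas_renewal_bounds p V Hp eps Heps).
Qed.
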